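(* In the setting of the context, let $\sigma$ be a faithful permutation of $\{1,\dots,T\}$ and assume the maximum delay is bounded by $\tau$. Then for every $t\in\{1,\dots,T\}$: (a) $|\sigma(t)-t|\le\tau$; (b) $\{\sigma(1),\dots,\sigma(t)\}\setminus\mathcal S_{\sigma(t)}\subset\{\sigma(t)-\tau,\dots,\sigma(t)+\tau\}$.
   Context: Delayed (possibly multi-agent) feedback protocol over rounds $t=1,\dots,T$: at each round the active agent plays a point using the feedback of the timestamps in $\mathcal S_t\subset\{1,\dots,t-1\}$ (the set of timestamps of feedback available to the active agent at time $t$). A permutation $\sigma$ of $\{1,\dots,T\}$ is faithful if $s\in\mathcal S_t$ implies $\sigma^{-1}(s)<\sigma^{-1}(t)$. The maximum delay is bounded by $\tau$ if $\{1,\dots,t-\tau-1\}\subset\mathcal S_t$ for all $t$. *)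

(* Timestamps {1,...,T} are encoded as 'I_T (timestamp k+1 <-> ordinal k);
   all conditions used (orders, differences) are shift-invariant. *)
From mathcomp Require Import all_boot all_order all_fingroup.
Set Implicit Arguments. Unset Strict Implicit. Unset Printing Implicit Defensive.

(* S t : set of timestamps of feedback available at time t; must lie in {1,...,t-1}. *)
Definition feedback_valid (T : nat) (S : 'I_T -> {set 'I_T}) : Prop :=
  forall t s : 'I_T, s \in S t -> s < t.

Definition faithful_perm (T : nat) (S : 'I_T -> {set 'I_T}) (sigma : {perm 'I_T}) : Prop :=
  forall t s : 'I_T, s \in S t -> (sigma^-1)%g s < (sigma^-1)%g t.

(* {1,...,t-tau-1} subset of S_t, i.e. every s with s + tau < t is in S_t. *)
Definition max_delay_bounded (T : nat) (S : 'I_T -> {set 'I_T}) (tau : nat) : Prop :=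
  forall t s : 'I_T, s + tau < t -> s \in S t.

(* Faithfulness and the delay bound together say that if s + tau < t then
   sigma^-1 s < sigma^-1 t: sigma is monotone up to tau.  For (a), if
   sigma t > t + tau then the t + 1 timestamps i <= t are all available at
   sigma t, hence all played strictly before position t, which is impossible;
   symmetrically, if sigma t + tau < t then the t + 1 values sigma i, i <= t,
   all lie in [0, sigma t + tau].  For (b), a timestamp missing from
   S (sigma t) is at least sigma t - tau by the delay bound, and at most
   sigma t + tau by almost-monotonicity. *)
From mathcomp Require Import all_boot all_order all_fingroup.

Set Implicit Arguments.
Unset Strict Implicit.
Unset Printing Implicit Defensive.

Lemma size_filter_enum_ord_leq (n : nat) (t : 'I_n) :
  size [seq i : 'I_n <- enum 'I_n | i <= t] = t.+1.
Proof.
rewrite -(size_map val) -(filter_map val (leq^~ t)) val_enum_ord.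
by rewrite (filter_iota_leq 0 (ltn_ord t)) size_iota.
Qed.

Lemma ltn_injective_prefix (n p m : nat) (f : 'I_n -> 'I_p) (t : 'I_n) :
  injective f -> (forall i : 'I_n, i <= t -> f i < m) -> t < m.
Proof.
move=> f_inj f_bound.
pose s := [seq val (f i) | i : 'I_n <- enum 'I_n & i <= t].
have <- : size s = t.+1 by rewrite size_map size_filter_enum_ord_leq.
rewrite -[m](size_iota 0); apply: uniq_leq_size.
  by rewrite (map_inj_uniq (inj_comp val_inj f_inj)) filter_uniq ?enum_uniq.
move=> k /mapP [i]; rewrite mem_filter => /andP [le_it _] ->.
by rewrite mem_iota add0n f_bound.
Qed.

Section FaithfulDelay.

Variables (T : nat) (S : 'I_T -> {set 'I_T}) (sigma : {perm 'I_T}) (tau : nat).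
Hypothesis sigma_faithful : faithful_perm S sigma.
Hypothesis delay_bounded : max_delay_bounded S tau.

Lemma perm_inv_delay_lt (s t : 'I_T) :
  s + tau < t -> (sigma^-1)%g s < (sigma^-1)%g t.
Proof. by move=> lt_st; apply/sigma_faithful/delay_bounded. Qed.

Lemma perm_le_delay (i j : 'I_T) : i <= j -> sigma i <= sigma j + tau.
Proof.
move=> le_ij; rewrite leqNgt; apply: contraTN le_ij => /perm_inv_delay_lt.
by rewrite !permK -ltnNge.
Qed.

Lemma perm_le_add_delay (t : 'I_T) : sigma t <= t + tau.
Proof.
rewrite leqNgt; apply/negP => lt_t_sigma.
suff : t < t by rewrite ltnn.
apply: (ltn_injective_prefix (@perm_inj _ (sigma^-1)%g)) => i le_it.
rewrite -(permK sigma t); apply: perm_inv_delay_lt.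
exact: leq_ltn_trans (leq_add le_it (leqnn tau)) lt_t_sigma.
Qed.

Lemma le_perm_add_delay (t : 'I_T) : t <= sigma t + tau.
Proof.
rewrite -ltnS; apply: (ltn_injective_prefix (@perm_inj _ sigma)) => i le_it.
by rewrite ltnS perm_le_delay.
Qed.

Lemma perm_prefix_unavailable_near (t i : 'I_T) :
  i <= t -> sigma i \notin S (sigma t) ->
  sigma t <= sigma i + tau /\ sigma i <= sigma t + tau.
Proof.
move=> le_it unavailable; split; last exact: perm_le_delay.
by rewrite leqNgt; apply: contra unavailable; apply: delay_bounded.
Qed.

End FaithfulDelay.

Theorem proposition11 (T : nat) (S : 'I_T -> {set 'I_T}) (sigma : {perm 'I_T}) (tau : nat) :
  feedback_valid S -> faithful_perm S sigma -> max_delay_bounded S tau ->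
  forall t : 'I_T,
    (* (a) |sigma(t) - t| <= tau *)
    (sigma t <= t + tau /\ t <= sigma t + tau) /\
    (* (b) {sigma(1),...,sigma(t)} \ S_{sigma(t)} subset {sigma(t)-tau,...,sigma(t)+tau} *)
    (forall s : 'I_T, s \in [set sigma i | i : 'I_T & i <= t] :\: S (sigma t) ->
       sigma t <= s + tau /\ s <= sigma t + tau).
Proof.
move=> _ faithful delay t; split.
  by split; [apply: perm_le_add_delay faithful delay t
            | apply: le_perm_add_delay faithful delay t].
move=> s /setDP [/imsetP [i]]; rewrite inE => le_it -> unavailable.
exact: perm_prefix_unavailable_near faithful delay t i le_it unavailable.
Qed.
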